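(* For each alphabet $A$ and each weight $\mathbf a$, the metric tree $\mathbb{T}^{A,\mathbf a}$ is geodesic.
   Context: An alphabet is $A=\mathbb N$ or $A=\{1,\dots,M\}$ with $M\ge2$. $A^k$: words of length $k$ ($A^0=\{\varepsilon\}$), $A^*=\bigcup_kA^k$, $A^{\mathbb N}$: infinite words; for $u\in A^*$, $A^n_u$ and $A^{\mathbb N}_u$ are the words of length $n$, resp. infinite words, beginning with $u$; $w(n)$ is the length-$n$ prefix; $i^{(k)}$ is $k$ copies of $i$. Graphs $G^A_k=(A^k,E^A_k)$: $E^A_1=\{\{1,i\}:i\in A\setminus\{1\}\}$, $E^A_{k+1}=\{\{12^{(k)},i1^{(k)}\}:i\in A\setminus\{1\}\}\cup\{\{iw,iu\}:i\in A,\{w,u\}\in E^A_k\}$. $A^{\mathbb N}_{u_1}\wedge A^{\mathbb N}_{u_2}$ is the set of $w\in A^{\mathbb N}_{u_1}$ such that for every $n>\max\{|u_1|,|u_2|\}$ there is $u\in A^n_{u_2}$ with $\{w(n),u\}\in E^A_n$, together with the symmetric set with $u_1,u_2$ swapped. A chain joining $w,w'\in A^{\mathbb N}$ is a list $A^{\mathbb N}_{v_1},\dots,A^{\mathbb N}_{v_N}$ with $w\in A^{\mathbb N}_{v_1}$, $w'\in A^{\mathbb N}_{v_N}$ and $A^{\mathbb N}_{v_i}\wedge A^{\mathbb N}_{v_{i+1}}\ne\emptyset$. A weight is a non-increasing $\mathbf a:\mathbb N\to(0,1/2]$ with $\mathbf a(1)=\mathbf a(2)=1/2$, $\lim\mathbf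 a(i)=0$; $\Delta_{\mathbf a}(\varepsilon)=1$, $\Delta_{\mathbf a}(i_1\cdots i_k)=\prod\mathbf a(i_j)$. $\rho_{A,\mathbf a}(w,u)=\inf\sum_{i=1}^N\Delta_{\mathbf a}(v_i)$ over chains joining $w$ and $u$; $\mathbb{T}^{A,\mathbf a}$ is the quotient of $A^{\mathbb N}$ by $\rho_{A,\mathbf a}(w,u)=0$ with metric $d_{A,\mathbf a}([w],[u])=\rho_{A,\mathbf a}(w,u)$. Geodesic: any two points $x,y$ are joined by a curve isometric to an interval of length $d(x,y)$. *)

From HB Require Import structures.
From mathcomp Require Import all_boot all_order all_algebra.
From mathcomp Require Import all_classical all_reals all_analysis.
Set Implicit Arguments. Unset Strict Implicit. Unset Printing Implicit Defensive.
Import Order.TTheory GRing.Theory Num.Theory.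
Local Open Scope ring_scope.
Local Open Scope classical_set_scope.

(* Alphabet: [M = None] means A = N = {1,2,3,...};
   [M = Some m] means A = {1,...,m} (with m >= 2 assumed in the theorem). *)
Definition inA (M : option nat) (i : nat) : Prop :=
  (1 <= i)%N /\ (match M with None => True | Some m => (i <= m)%N end).

Definition word (M : option nat) (u : seq nat) : Prop :=
  forall x, x \in u -> inA M x.

(* infinite words over A (indexed from 0) *)
Definition infword (M : option nat) (w : nat -> nat) : Prop :=
  forall n, inA M (w n).

Definition prefix (w : nat -> nat) (n : nat) : seq nat := mkseq w n.

Definition cyl (M : option nat) (u : seq nat) (w : nat -> nat) : Prop :=
  infword M w /\ prefix w (size u) = u.

(* Edge sets E^A_k of the graphs G^A_k (both orientations of each
   unordered edge are listed). *)
Inductive edgeE (M : option nat) : nat -> seq nat -> seq nat -> Prop :=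
  | E1l i : inA M i -> i <> 1%N -> edgeE M 1 [:: 1%N] [:: i]
  | E1r i : inA M i -> i <> 1%N -> edgeE M 1 [:: i] [:: 1%N]
  | ESl k i : inA M i -> i <> 1%N ->
      edgeE M k.+1 (1%N :: nseq k 2%N) (i :: nseq k 1%N)
  | ESr k i : inA M i -> i <> 1%N ->
      edgeE M k.+1 (i :: nseq k 1%N) (1%N :: nseq k 2%N)
  | Ecat k i w u : inA M i -> edgeE M k w u -> edgeE M k.+1 (i :: w) (i :: u).

Definition wedge_half (M : option nat) (u1 u2 : seq nat) (w : nat -> nat) : Prop :=
  cyl M u1 w /\
  forall n, (maxn (size u1) (size u2) < n)%N ->
    exists u : seq nat, size u = n /\ word M u /\ take (size u2) u = u2 /\
      edgeE M n (prefix w n) u.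

Definition wedge (M : option nat) (u1 u2 : seq nat) : set (nat -> nat) :=
  [set w | wedge_half M u1 u2 w \/ wedge_half M u2 u1 w].

Definition chain (M : option nat) (vs : seq (seq nat)) (w w' : nat -> nat) : Prop :=
  vs <> [::] /\ (forall v, v \in vs -> word M v) /\
  cyl M (head [::] vs) w /\ cyl M (last [::] vs) w' /\
  forall i, (i.+1 < size vs)%N ->
    wedge M (nth [::] vs i) (nth [::] vs i.+1) !=set0.

Definition is_weight (R : realType) (a : nat -> R) : Prop :=
  (forall i, (1 <= i)%N -> 0 < a i <= 1/2) /\
  (forall i j, (1 <= i)%N -> (i <= j)%N -> a j <= a i) /\
  a 1%N = 1/2 /\ a 2%N = 1/2 /\
  (a n @[n --> \oo] --> (0 : R^o)).

Definition Delta (R : realType) (a : nat -> R) (v : seq nat) : R :=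
  \prod_(x <- v) a x.

Definition rho (R : realType) (M : option nat) (a : nat -> R) (w u : nat -> nat) : R :=
  inf [set s | exists vs, chain M vs w u /\ s = \sum_(v <- vs) Delta a v].

From HB Require Import structures.
From mathcomp Require Import all_boot all_order all_algebra.
From mathcomp Require Import all_classical all_reals all_analysis.
From mathcomp Require Import lra zify ring.
From Pilot Require Import Defs.
Set Implicit Arguments. Unset Strict Implicit. Unset Printing Implicit Defensive.
Import Order.TTheory GRing.Theory Num.Theory.
Local Open Scope ring_scope.
Local Open Scope classical_set_scope.

(* The tree is self-similar: it is the half-size copy [1 T], whose top point
   [1 2^oo] (at height 1/2) is glued to the roots [i 1^oo] of the copies [i T]
   scaled by [a i]. Writing this down for the Gromov product at the root [1^oo]
   gives a contracting recursion, whose fixed point [gprod] yields the candidate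
   distance [tdist x y = height x + height y - 2 gprod x y].

   [tdist <= rho]: on a cylinder [v] the function [tdist _ y] oscillates by at
   most [Delta v], and it takes equal values at glued points, so along a chain
   it varies by at most the cost of the chain. [rho <= tdist]: by induction on
   the first letters, routing through the branch point [1 2^oo] when they differ.

   The point [ray z t] at height [t] below [z] satisfies
   [gprod (ray z t) y = min t (gprod z y)]; hence going down the ray of [w] to
   the confluence height [gprod w u] and up the ray of [u] is an isometric path
   of length [tdist w u = rho w u]. *)

Section Dyadic.
Variable R : realType.

Definition halfpow (n : nat) : R := 2^-1 ^+ n.

Lemma halfpow_ge0 n : 0 <= halfpow n.
Proof. by rewrite exprn_ge0 // invr_ge0. Qed.

Lemma halfpow0 : halfpow 0 = 1.
Proof. exact: expr0. Qed.

Lemma halfpowS n : halfpow n.+1 = halfpow n / 2.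
Proof. exact: exprSr. Qed.

Lemma halfpow_le m n : (m <= n)%N -> halfpow n <= halfpow m.
Proof.
move=> le_mn; rewrite -(subnKC le_mn); elim: (n - m)%N => [|k IH]; first by rewrite addn0.
by rewrite addnS halfpowS; have := halfpow_ge0 (m + k); lra.
Qed.

Lemma halfpow_small (e : R) : 0 < e -> exists n, halfpow n < e.
Proof.
move=> e0; have [k Hk] := ltr_add_invr e0; exists k.
have pow2_ge : (k.+1%:R : R) <= 2 ^+ k.
  elim: k {Hk} => [|k IH]; first by rewrite expr0.
  rewrite exprS -[k.+2%:R]natr1; have : (1 : R) <= 2 ^+ k by rewrite exprn_ege1 ?ler1n.
  lra.
apply: le_lt_trans _ (_ : k.+1%:R^-1 < e); last by rewrite add0r in Hk.
by rewrite /halfpow exprVn lef_pV2 ?posrE ?exprn_gt0.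
Qed.

Lemma le_halfpow (p q C : R) : (forall n, p <= q + C * halfpow n) -> p <= q.
Proof.
move=> H; apply/ler_addgt0Pr => e e0.
have [C_le0|C_gt0] := lerP C 0; first by have := H 0%N; rewrite halfpow0; lra.
have [n Hn] := halfpow_small (divr_gt0 e0 C_gt0).
have : C * halfpow n <= e by rewrite mulrC -ler_pdivlMr // ltW.
by have := H n; lra.
Qed.

Lemma eq_halfpow (p q C : R) : (forall n, `|p - q| <= C * halfpow n) -> p = q.
Proof.
move=> H; apply/eqP; rewrite eq_le.
by apply/andP; split; apply: (@le_halfpow _ _ C) => n; have := H n; rewrite ler_norml; lra.
Qed.

Definition dyadic_lim (f : nat -> R) : R := sup (range (fun n => f n - 2 * halfpow n)).

Lemma dyadic_limP (f : nat -> R) : (forall n, `|f n.+1 - f n| <= halfpow n) ->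
  forall n, `|dyadic_lim f - f n| <= 2 * halfpow n.
Proof.
move=> Hf.
have dist_shift n k : `|f (n + k)%N - f n| <= 2 * halfpow n - 2 * halfpow (n + k)%N.
  elim: k => [|k IH]; first by rewrite addn0 !subrr normr0.
  rewrite addnS; have := Hf (n + k)%N; rewrite halfpowS.
  by move: IH; rewrite !ler_norml; lra.
have ub m n : f m - 2 * halfpow m <= f n + 2 * halfpow n.
  have [le_nm|lt_mn] := leqP n m.
    have := dist_shift n (m - n)%N; rewrite subnKC //; have := halfpow_ge0 m.
    by rewrite ler_norml; lra.
  have := dist_shift m (n - m)%N; rewrite subnKC ?(ltnW lt_mn) //; have := halfpow_ge0 n.
  by rewrite ler_norml; lra.
have ubd : ubound (range (fun n => f n - 2 * halfpow n)) (f 0%N + 2 * halfpow 0).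
  by move=> _ [m _ <-].
move=> n; rewrite ler_norml; apply/andP; split.
  have : f n - 2 * halfpow n <= dyadic_lim f by apply: (ub_le_sup (ex_intro _ _ ubd)); exists n.
  lra.
have : dyadic_lim f <= f n + 2 * halfpow n.
  by apply: ge_sup; [exists (f n - 2 * halfpow n), n | move=> _ [m _ <-]].
lra.
Qed.

End Dyadic.

(** * Infinite words, cylinders and wedges *)

Definition wcons (c : nat) (x : nat -> nat) : nat -> nat :=
  fun k => if k is k'.+1 then x k' else c.
Definition wtail (x : nat -> nat) : nat -> nat := fun k => x k.+1.
Definition wconst (c : nat) : nat -> nat := fun _ => c.
Definition wcat (p : seq nat) (x : nat -> nat) : nat -> nat := foldr wcons x p.

Notation ones := (wconst 1).
Notation twos := (wconst 2).

Lemma wcons_tail x : wcons (x 0%N) (wtail x) = x.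
Proof. by apply: funext => -[]. Qed.

Lemma wcons_const c : wcons c (wconst c) = wconst c.
Proof. by apply: funext => -[]. Qed.

Lemma size_prefix x n : size (prefix x n) = n.
Proof. exact: size_mkseq. Qed.

Lemma prefix_wcons c x n : prefix (wcons c x) n.+1 = c :: prefix x n.
Proof. by rewrite /prefix /mkseq /= -(addn0 1%N) iotaDl -map_comp. Qed.

Lemma take_prefix x k n : (k <= n)%N -> take k (prefix x n) = prefix x k.
Proof.
move=> le_kn; apply: (@eq_from_nth _ 0%N); first by rewrite size_takel ?size_prefix.
move=> i; rewrite size_takel ?size_prefix // => lt_ik.
by rewrite nth_take // !nth_mkseq //; apply: leq_trans le_kn.
Qed.

Lemma prefix_wcat p x n : prefix (wcat p x) (size p + n) = p ++ prefix x n.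
Proof. by elim: p => [|c p IH] //=; rewrite prefix_wcons IH. Qed.

Lemma prefix_const c n : prefix (wconst c) n = nseq n c.
Proof. by elim: n => [|n IH] //; rewrite -wcons_const prefix_wcons IH. Qed.

Lemma prefix_consE x c v : prefix x (size v).+1 = c :: v ->
  x 0%N = c /\ prefix (wtail x) (size v) = v.
Proof. by rewrite -{1}(wcons_tail x) prefix_wcons => -[-> ->]. Qed.

Section Words.
Variable M : option nat.

Lemma word_cons c v : word M (c :: v) <-> inA M c /\ word M v.
Proof.
split; last by move=> [Hc Hv] x; rewrite inE => /orP[/eqP->|/Hv].
by move=> H; split=> [|x xv]; apply: H; rewrite inE ?eqxx ?xv ?orbT.
Qed.

Lemma word_cat u v : word M u -> word M v -> word M (u ++ v).
Proof. by move=> Hu Hv x; rewrite mem_cat => /orP[/Hu|/Hv]. Qed.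

Lemma word_nseq k c : inA M c -> word M (nseq k c).
Proof. by move=> Hc x /nseqP[-> _]. Qed.

Lemma word_prefix x n : infword M x -> word M (prefix x n).
Proof. by move=> Hx y /mapP[k _ ->]. Qed.

Lemma infword_wcons c x : inA M c -> infword M x -> infword M (wcons c x).
Proof. by move=> Hc Hx [|k] /=. Qed.

Lemma infword_tail x : infword M x -> infword M (wtail x).
Proof. by move=> Hx k; apply: Hx. Qed.

Lemma infword_const c : inA M c -> infword M (wconst c).
Proof. by move=> Hc k. Qed.

Lemma infword_wcat p x : word M p -> infword M x -> infword M (wcat p x).
Proof.
elim: p => [|c p IH] //= /word_cons [Hc Hp] Hx.
by apply: infword_wcons => //; apply: IH.
Qed.

Lemma cyl_consE c v x : cyl M (c :: v) x -> x 0%N = c /\ cyl M v (wtail x).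
Proof.
move=> [Hx /prefix_consE [-> Hv]]; split=> //; split=> //; exact: infword_tail.
Qed.

Lemma cyl_wcons c v x : inA M c -> cyl M v x -> cyl M (c :: v) (wcons c x).
Proof.
by move=> Hc [Hx Hp]; split; [exact: infword_wcons | rewrite /= prefix_wcons Hp].
Qed.

Lemma cyl_prefix x n : infword M x -> cyl M (prefix x n) x.
Proof. by move=> Hx; split; rewrite ?size_prefix. Qed.

Lemma cyl_nil x : infword M x -> cyl M [::] x.
Proof. by move=> Hx; split. Qed.

Lemma cyl_const c k : inA M c -> cyl M (nseq k c) (wconst c).
Proof. by move=> Hc; split; rewrite ?size_nseq ?prefix_const. Qed.

Lemma cyl_wcat p v x : word M p -> cyl M v x -> cyl M (p ++ v) (wcat p x).
Proof.
elim: p => [|c p IH] // /word_cons [Hc Hp] Hv.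
by apply: cyl_wcons => //; apply: IH.
Qed.

Lemma cyl_take v1 v2 x : cyl M v2 x -> take (size v1) v2 = v1 -> cyl M v1 x.
Proof.
move=> [Hx Hp] Ht; split => //.
have le : (size v1 <= size v2)%N by rewrite -Ht size_take_min geq_minr.
by rewrite -(take_prefix x le) Hp.
Qed.

Lemma edge_cat p n q1 q2 : word M p -> edgeE M n q1 q2 ->
  edgeE M (size p + n) (p ++ q1) (p ++ q2).
Proof.
elim: p => [|c p IH] //= /word_cons [Hc Hp] He.
by apply: Ecat => //; apply: IH.
Qed.

Lemma edgeE_glue n p q : edgeE M n p q -> exists r i k,
  [/\ inA M i, i <> 1%N, word M r &
   ((p = r ++ 1%N :: nseq k 2%N /\ q = r ++ i :: nseq k 1%N) \/
    (p = r ++ i :: nseq k 1%N /\ q = r ++ 1%N :: nseq k 2%N))].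
Proof.
elim=> {n p q} [i|i|k i|k i|k i w u Hi _ [r [j [l [Hj Hj1 Hr Hwu]]]]].
- by exists [::], i, 0%N; split=> //; left.
- by exists [::], i, 0%N; split=> //; right.
- by exists [::], i, k; split=> //; left.
- by exists [::], i, k; split=> //; right.
exists (i :: r), j, l; split => //; first exact/word_cons.
by case: Hwu => -[-> ->]; [left|right].
Qed.

Lemma wedgeC v1 v2 : wedge M v1 v2 = wedge M v2 v1.
Proof. by apply/seteqP; split=> z []; [right|left|right|left]. Qed.

Lemma wedge_half_wcons c v1 v2 x : inA M c -> wedge_half M v1 v2 x ->
  wedge_half M (c :: v1) (c :: v2) (wcons c x).
Proof.
move=> Hc [Hx H]; split; first exact: cyl_wcons.
move=> [|n] //; rewrite /= maxnSS ltnS => /H [u [Hu1 [Hu2 [Hu3 Hu4]]]].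
exists (c :: u); rewrite /= Hu1 Hu3 prefix_wcons; split=> //; split; first exact/word_cons.
by split=> //; apply: Ecat.
Qed.

Lemma wedge_wcons c v1 v2 : inA M c -> wedge M v1 v2 !=set0 ->
  wedge M (c :: v1) (c :: v2) !=set0.
Proof. by move=> Hc [x [Hx|Hx]]; exists (wcons c x); [left|right]; exact: wedge_half_wcons. Qed.

Hypothesis inA2 : inA M 2.

Lemma inA1 : inA M 1.
Proof. by move: inA2; rewrite /inA; case: M => // m [_ le2m]; split=> //; apply: ltnW. Qed.

Lemma cyl_exists v : word M v -> exists y, cyl M v y.
Proof.
move=> Hv; exists (wcat v twos).
by have := cyl_wcat Hv (cyl_nil (infword_const inA2)); rewrite cats0.
Qed.

Lemma wedge_half_glue k i : inA M i -> i <> 1%N ->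
  wedge_half M (1%N :: nseq k 2%N) (i :: nseq k 1%N) (wcons 1 twos).
Proof.
move=> Hi Hi1; split; first by apply: cyl_wcons; [exact: inA1 | exact: cyl_const].
move=> n; rewrite /= !size_nseq maxnn => lt_kn.
have En : n = n.-1.+1 by lia.
exists (i :: nseq n.-1 1%N); split; first by rewrite /= size_nseq -En.
split; first by apply/word_cons; split=> //; apply: word_nseq; exact: inA1.
split; first by rewrite /= take_nseq //; lia.
by rewrite En prefix_wcons prefix_const; exact: ESl.
Qed.

Lemma wedge_half_take v1 v2 : word M v2 -> take (size v1) v2 = v1 ->
  wedge_half M v1 v2 (wcat v2 (wcons 1 twos)).
Proof.
move=> Hv2 Ht; have inA1 := inA1.
have Hz : cyl M (v2 ++ [::]) (wcat v2 (wcons 1 twos)).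
  by apply: cyl_wcat => //; apply/cyl_nil/infword_wcons.
rewrite cats0 in Hz; split; first exact: cyl_take Hz Ht.
move=> n; rewrite gtn_max => /andP[_ lt_v2n].
set k := (n - size v2).-1; have En : n = (size v2 + k.+1)%N by rewrite /k; lia.
exists (v2 ++ 2%N :: nseq k 1%N); split; first by rewrite size_cat /= size_nseq.
split; first by apply: word_cat => //; apply/word_cons; split=> //; apply: word_nseq.
split; first by rewrite take_size_cat.
rewrite En prefix_wcat prefix_wcons prefix_const; apply: edge_cat => //; exact: ESl.
Qed.

Lemma wedge_common v1 v2 y : word M v1 -> word M v2 -> cyl M v1 y -> cyl M v2 y ->
  wedge M v1 v2 !=set0.
Proof.
move=> Hv1 Hv2 [_ H1] [_ H2].
have [le|le] := leqP (size v1) (size v2).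
  exists (wcat v2 (wcons 1 twos)); left; apply: wedge_half_take => //.
  by rewrite -H2 take_prefix // H1.
exists (wcat v1 (wcons 1 twos)); right; apply: wedge_half_take => //.
by rewrite -H1 take_prefix ?H2 // ltnW.
Qed.

End Words.

Section Chains.
Variables (M : option nat) (inA2 : inA M 2).

Lemma chain_nil w w' : ~ chain M [::] w w'.
Proof. by case. Qed.

Lemma chain1 v w w' : word M v -> cyl M v w -> cyl M v w' -> chain M [:: v] w w'.
Proof.
move=> Hv H1 H2; split=> //; split; first by move=> u; rewrite inE => /eqP->.
by do 2!split=> //; case.
Qed.

Lemma chain1E v w w' : chain M [:: v] w w' -> [/\ word M v, cyl M v w & cyl M v w'].
Proof. by move=> [_ [Hws [H1 [H2 _]]]]; split=> //; apply: Hws; rewrite mem_head. Qed.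

Lemma chain_head vs w w' : chain M vs w w' -> word M (head [::] vs) /\ cyl M (head [::] vs) w.
Proof.
by case: vs => [/chain_nil|v vs [_ [Hws [Hc _]]]] //; split=> //; apply: Hws; rewrite mem_head.
Qed.

Lemma chain_last vs w w' : chain M vs w w' -> word M (last [::] vs) /\ cyl M (last [::] vs) w'.
Proof.
case: vs => [/chain_nil|v vs [_ [Hws [_ [Hc _]]]]] //; split=> //.
by apply: Hws; rewrite /= mem_last.
Qed.

Lemma chain_cons v vs w y w' : word M v -> cyl M v w ->
  wedge M v (head [::] vs) !=set0 -> chain M vs y w' -> chain M (v :: vs) w w'.
Proof.
move=> Hv Hc Hwd [ne [Hws [_ [Hl Hlk]]]]; split=> //; split.
  by move=> u; rewrite inE => /orP[/eqP->|/Hws].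
split=> //; split; first by case: vs ne Hl {Hws Hlk Hwd}.
by move=> [|i] /= lt; [rewrite nth0 | apply: Hlk].
Qed.

Lemma chain_consE v v' vs w w' : chain M [:: v, v' & vs] w w' ->
  [/\ word M v, cyl M v w, wedge M v v' !=set0 &
     forall y, cyl M v' y -> chain M (v' :: vs) y w'].
Proof.
move=> [_ [Hws [Hc [Hl Hlk]]]]; split=> //.
- by apply: Hws; rewrite mem_head.
- exact: (Hlk 0%N).
move=> y Hy; split=> //; split; first by move=> u uvs; apply: Hws; rewrite inE uvs orbT.
by split=> //; split=> // i lt; apply: (Hlk i.+1).
Qed.

Lemma chain_tail v v' vs w w' : chain M [:: v, v' & vs] w w' ->
  exists y, chain M (v' :: vs) y w'.
Proof.
move=> Hc; have [_ _ _ Hr] := chain_consE Hc; have [_ [Hws _]] := Hc.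
have [|y Hy] := cyl_exists inA2 (_ : word M v'); first by apply: Hws; rewrite !inE eqxx orbT.
by exists y; apply: Hr.
Qed.

Lemma chain_cat_wedge vs1 vs2 w y y' w' : chain M vs1 w y -> chain M vs2 y' w' ->
  wedge M (last [::] vs1) (head [::] vs2) !=set0 -> chain M (vs1 ++ vs2) w w'.
Proof.
elim: vs1 w => [|v [|v' vs1] IH] w; first by move/chain_nil.
  by move=> /chain1E [Hv Hc _] H2 /= Hwd; exact: chain_cons Hv Hc Hwd H2.
move=> Hc1 H2 Hlast; have [Hv Hc Hwd _] := chain_consE Hc1; have [z Hz] := chain_tail Hc1.
exact: chain_cons Hv Hc _ (IH z Hz H2 Hlast).
Qed.

Lemma chain_cat vs1 vs2 w y w' : chain M vs1 w y -> chain M vs2 y w' ->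
  chain M (vs1 ++ vs2) w w'.
Proof.
move=> H1 H2; apply: (chain_cat_wedge H1 H2).
have [Hv1 Hc1] := chain_last H1; have [Hv2 Hc2] := chain_head H2.
exact: (wedge_common inA2 Hv1 Hv2 Hc1 Hc2).
Qed.

Lemma chain_rev vs w w' : chain M vs w w' -> chain M (rev vs) w' w.
Proof.
elim: vs w => [|v [|v' vs] IH] w; first by move/chain_nil.
  by move=> /chain1E [Hv H1 H2]; apply: chain1.
move=> Hc0; have [Hv Hc Hwd _] := chain_consE Hc0; have [z /IH Hz] := chain_tail Hc0.
rewrite rev_cons -cats1; apply: (chain_cat_wedge Hz (chain1 Hv Hc Hc)).
by rewrite rev_cons last_rcons wedgeC.
Qed.

Lemma chain_map c vs w w' : inA M c -> chain M vs w w' ->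
  chain M (map (cons c) vs) (wcons c w) (wcons c w').
Proof.
move=> Hc; elim: vs w => [|v [|v' vs] IH] w; first by move/chain_nil.
  by move=> /chain1E [Hv H1 H2]; apply: chain1; rewrite ?word_cons; try exact: cyl_wcons.
move=> Hc0; have [Hv Hcv Hwd _] := chain_consE Hc0; have [z /IH Hz] := chain_tail Hc0.
apply: (chain_cons _ _ _ Hz); [exact/word_cons | exact: cyl_wcons | exact: wedge_wcons].
Qed.

End Chains.

(** * The Gromov product at the root *)

Lemma Delta_cons (R : realType) (a : nat -> R) c v : Delta a (c :: v) = a c * Delta a v.
Proof. exact: big_cons. Qed.

Lemma infword_None M x : infword M x -> infword None x.
Proof. by move=> Hx k; split=> //; case: (Hx k). Qed.

Lemma cyl_None M v x : cyl M v x -> cyl None v x.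
Proof. by case=> /infword_None. Qed.

Lemma infword_ones : infword None ones.
Proof. by []. Qed.

Lemma infword_twos : infword None twos.
Proof. by []. Qed.

Lemma word_None M v : word M v -> word None v.
Proof. by move=> Hv c /Hv []. Qed.

Lemma min_affine (R : realDomainType) (b k s t : R) : 0 <= k ->
  Num.min (b + k * s) (b + k * t) = b + k * Num.min s t.
Proof.
move=> k_ge0; case: (lerP s t) => st; case: (lerP (b + k * s) (b + k * t)) => h //; nra.
Qed.

Definition contraction_weight (R : realType) (a : nat -> R) : Prop :=
  (forall c, 0 < a c <= 2^-1) /\ a 1%N = 2^-1 /\ a 2%N = 2^-1.

Section GromovProduct.
Variables (R : realType) (a : nat -> R).
Hypothesis a_ok : contraction_weight a.
Let a_range : forall c, 0 < a c <= 2^-1 := proj1 a_ok.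
Let a1 : a 1%N = 2^-1 := proj1 (proj2 a_ok).
Let a2 : a 2%N = 2^-1 := proj2 (proj2 a_ok).

(* [gprod] is the Gromov product at the root [ones], so [height x] is the
   distance from the root. In [gprod_step]: a common first letter [c] rescales
   by [a c], after the offset 1/2 of the branch point [1 twos] when [c >= 2];
   different letters [>= 2] meet at the branch point; a point of [1 T] meets a
   point of another subtree where it meets [1 twos]. *)
Definition gprod_step (f : (nat -> nat) -> (nat -> nat) -> R) (x y : nat -> nat) : R :=
  if x 0%N == y 0%N then
    (if (2 <= x 0%N)%N then 2^-1 else 0) + a (x 0%N) * f (wtail x) (wtail y)
  else if (2 <= x 0%N)%N && (2 <= y 0%N)%N then 2^-1
  else if x 0%N == 1%N then f (wtail x) twos / 2
  else if y 0%N == 1%N then f (wtail y) twos / 2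
  else 0.

Fixpoint gprod_approx (n : nat) : (nat -> nat) -> (nat -> nat) -> R :=
  if n is n'.+1 then gprod_step (gprod_approx n') else fun _ _ => 0.

Definition gprod (x y : nat -> nat) : R := dyadic_lim (fun n => gprod_approx n x y).

Definition height (x : nat -> nat) : R := gprod x x.

Definition tdist (x y : nat -> nat) : R := height x + height y - 2 * gprod x y.

Lemma gprod_step_contract f g e : (forall x y, `|f x y - g x y| <= e) ->
  forall x y, `|gprod_step f x y - gprod_step g x y| <= e / 2.
Proof.
move=> H x y; have e_ge0 : 0 <= e := le_trans (normr_ge0 _) (H x y).
have half_diff u v : `|f u v / 2 - g u v / 2| <= e / 2.
  by have := H u v; rewrite -mulrBl normrM (ger0_norm (x := 2^-1)) ?invr_ge0 //; lra.
rewrite /gprod_step; case: ifP => _.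
  have /andP[a_gt0 a_le] := a_range (x 0%N); have := H (wtail x) (wtail y).
  rewrite opprD addrACA subrr add0r -mulrBr normrM ger0_norm ?(ltW a_gt0) //.
  by have := normr_ge0 (f (wtail x) (wtail y) - g (wtail x) (wtail y)); nra.
case: ifP => _; first by rewrite subrr normr0 divr_ge0.
by do 2!case: ifP => _ //; rewrite subrr normr0 divr_ge0.
Qed.

Lemma gprod_step_bound f : (forall x y, 0 <= f x y <= 1) ->
  forall x y, 0 <= gprod_step f x y <= 1.
Proof.
move=> H x y; rewrite /gprod_step; case: ifP => _.
  have /andP[a_gt0 a_le] := a_range (x 0%N); have /andP[f_ge0 f_le1] := H (wtail x) (wtail y).
  by case: ifP => _; nra.
case: ifP => _; first lra.
case: ifP => _; first by have /andP[f_ge0 f_le1] := H (wtail x) twos; lra.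
case: ifP => _; last lra.
by have /andP[f_ge0 f_le1] := H (wtail y) twos; lra.
Qed.

Lemma gprod_approx_bound n x y : 0 <= gprod_approx n x y <= 1.
Proof. by elim: n x y => [|n IH] x y /=; [lra | exact: gprod_step_bound]. Qed.

Lemma gprod_approx_cauchy n x y :
  `|gprod_approx n.+1 x y - gprod_approx n x y| <= halfpow R n.
Proof.
elim: n x y => [|n IH] x y; last by rewrite halfpowS; exact: gprod_step_contract.
by rewrite halfpow0 /= subr0 ger0_norm; case/andP: (gprod_approx_bound 1 x y).
Qed.

Lemma gprod_approx_err x y n : `|gprod x y - gprod_approx n x y| <= 2 * halfpow R n.
Proof. by apply: dyadic_limP => k; exact: gprod_approx_cauchy. Qed.

Lemma gprod_fix x y : gprod x y = gprod_step gprod x y.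
Proof.
apply: (@eq_halfpow _ _ _ 3) => n.
have e1 := gprod_approx_err x y n.+1.
have e2 : `|gprod_step (gprod_approx n) x y - gprod_step gprod x y| <= 2 * halfpow R n / 2.
  by apply: gprod_step_contract => u v; rewrite distrC; exact: gprod_approx_err.
move: e1 e2; rewrite /= halfpowS; have := halfpow_ge0 R n.
by rewrite !ler_norml; lra.
Qed.

Lemma gprod_bound x y : 0 <= gprod x y <= 1.
Proof.
have Hb n := gprod_approx_bound n x y; have He n := gprod_approx_err x y n.
by apply/andP; split; apply: (@le_halfpow _ _ _ 2) => n;
  move: (Hb n) (He n); rewrite ler_norml; lra.
Qed.

Lemma gprod_sym x y : gprod x y = gprod y x.
Proof.
have step_sym f : (forall u v, f u v = f v u) ->
    forall u v, gprod_step f u v = gprod_step f v u.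
  move=> H u v; rewrite /gprod_step eq_sym; case: eqP => [E|ne]; first by rewrite E H.
  rewrite andbC; case: ifP => // _.
  by case: (u 0%N =P 1%N) => [E1|n1]; case: (v 0%N =P 1%N) => [E2|n2] //; case: ne; rewrite E1.
have approx_sym n u v : gprod_approx n u v = gprod_approx n v u.
  by elim: n u v => [|n IH] u v //=; apply: step_sym.
apply: (@eq_halfpow _ _ _ 4) => n.
have := gprod_approx_err x y n; have := gprod_approx_err y x n; rewrite approx_sym.
by rewrite !ler_norml; lra.
Qed.

Lemma gprod_wcons_same c x y :
  gprod (wcons c x) (wcons c y) = (if (2 <= c)%N then 2^-1 else 0) + a c * gprod x y.
Proof. by rewrite gprod_fix /gprod_step /= eqxx. Qed.

Lemma gprod_wcons_big c d x y : c <> d -> (2 <= c)%N -> (2 <= d)%N ->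
  gprod (wcons c x) (wcons d y) = 2^-1.
Proof. by move=> /eqP/negPf cd c2 d2; rewrite gprod_fix /gprod_step /= cd c2 d2. Qed.

Lemma gprod_wcons_1 d x y : (2 <= d)%N ->
  gprod (wcons 1 x) (wcons d y) = gprod x twos / 2.
Proof. by case: d => [|[|d]] // _; rewrite gprod_fix. Qed.

Lemma height_wcons c x :
  height (wcons c x) = (if (2 <= c)%N then 2^-1 else 0) + a c * height x.
Proof. exact: gprod_wcons_same. Qed.

Lemma height_twos : height twos = 1.
Proof. by have := height_wcons 2 twos; rewrite wcons_const a2 /=; lra. Qed.

Lemma height_ones : height ones = 0.
Proof. by have := height_wcons 1 ones; rewrite wcons_const a1 /=; lra. Qed.

Lemma height_bound x : 0 <= height x <= 1.
Proof. exact: gprod_bound. Qed.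

Lemma gprod_le_height x y : infword None x -> infword None y -> gprod x y <= height x.
Proof.
move=> Hx Hy; apply: (@le_halfpow _ _ _ 1) => n; rewrite mul1r.
elim: n x y Hx Hy => [|n IH] x y Hx Hy.
  by rewrite halfpow0; have := gprod_bound x y; have := height_bound x; lra.
rewrite -(wcons_tail x) -(wcons_tail y) halfpowS height_wcons.
have /andP[a_gt0 a_le] := a_range (x 0%N); have e_ge0 := halfpow_ge0 R n.
have /andP[h_ge0 h_le1] := height_bound (wtail x).
have c_ge1 := proj1 (Hx 0%N); have d_ge1 := proj1 (Hy 0%N).
case: (eqVneq (x 0%N) (y 0%N)) => [<-|cd].
  rewrite gprod_wcons_same; have := IH _ _ (infword_tail Hx) (infword_tail Hy).
  by case: ifP => _; nra.
have [c_ge2|c_lt2] := leqP 2 (x 0%N).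
  have [d_ge2|d_lt2] := leqP 2 (y 0%N).
    by rewrite gprod_wcons_big //; [nra | apply/eqP].
  have -> : y 0%N = 1%N by lia.
  by rewrite gprod_sym gprod_wcons_1 //; have := gprod_bound (wtail y) twos; nra.
have -> : x 0%N = 1%N by lia.
rewrite gprod_wcons_1 ?a1 /=; last by move: cd; lia.
by have := IH _ twos (infword_tail Hx) infword_twos; lra.
Qed.

Lemma gprod_ones y : infword None y -> gprod ones y = 0.
Proof.
move=> Hy; apply/eqP; rewrite eq_le; have := gprod_le_height infword_ones Hy.
by rewrite height_ones => ->; case/andP: (gprod_bound ones y).
Qed.

Lemma tdist_sym x y : tdist x y = tdist y x.
Proof. by rewrite /tdist gprod_sym (addrC (height x)). Qed.

Lemma tdist_xx x : tdist x x = 0.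
Proof. by rewrite /tdist /height; ring. Qed.

Lemma tdist_ge0 x y : infword None x -> infword None y -> 0 <= tdist x y.
Proof.
move=> Hx Hy; have := gprod_le_height Hx Hy; have := gprod_le_height Hy Hx.
by rewrite /tdist gprod_sym; lra.
Qed.

Lemma tdist_ones x : infword None x -> tdist x ones = height x.
Proof. by move=> Hx; rewrite /tdist height_ones gprod_sym gprod_ones //; lra. Qed.

Lemma tdist_wcons_same c x y : tdist (wcons c x) (wcons c y) = a c * tdist x y.
Proof. by rewrite /tdist !height_wcons gprod_wcons_same; ring. Qed.

Lemma tdist_wcons_big c d x y : c <> d -> (2 <= c)%N -> (2 <= d)%N ->
  tdist (wcons c x) (wcons d y) = a c * height x + a d * height y.
Proof. by move=> cd c2 d2; rewrite /tdist !height_wcons gprod_wcons_big // c2 d2; lra. Qed.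

Lemma tdist_wcons_1 d x y : (2 <= d)%N ->
  tdist (wcons 1 x) (wcons d y) = tdist x twos / 2 + a d * height y.
Proof.
by move=> d2; rewrite /tdist !height_wcons gprod_wcons_1 // d2 a1 height_twos /=; lra.
Qed.

Lemma tdist_wcons1_twos x : tdist (wcons 1 x) twos = tdist x twos / 2 + 2^-1.
Proof. by rewrite -{1}[twos]wcons_const tdist_wcons_1 // height_twos a2; lra. Qed.

Lemma tdist_wcons2_twos x : tdist (wcons 2 x) twos = tdist x twos / 2.
Proof. by rewrite -{1}[twos]wcons_const tdist_wcons_same a2 mulrC. Qed.

Lemma tdist_wcons_twos c x : (3 <= c)%N -> tdist (wcons c x) twos = a c * height x + 2^-1.
Proof.
move=> c3; rewrite -[twos]wcons_const tdist_wcons_big; [|lia|lia|by []].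
by rewrite height_twos a2 mulr1.
Qed.

Lemma tdist_branch c x : (2 <= c)%N -> tdist (wcons 1 twos) (wcons c x) = a c * height x.
Proof. by move=> c2; rewrite tdist_wcons_1 // tdist_xx; lra. Qed.

Lemma tdist_branch_split c d x y : (1 <= c)%N -> (1 <= d)%N -> c <> d ->
  tdist (wcons c x) (wcons d y) =
  tdist (wcons c x) (wcons 1 twos) + tdist (wcons 1 twos) (wcons d y).
Proof.
move=> c1 d1 cd; have [c_ge2|c_lt2] := leqP 2 c.
  rewrite (tdist_sym (wcons c x) (wcons 1 twos)) tdist_branch //.
  have [d_ge2|d_lt2] := leqP 2 d; first by rewrite tdist_wcons_big // tdist_branch.
  have -> : d = 1%N by lia.
  by rewrite tdist_wcons_same a1 tdist_sym tdist_wcons_1 // (tdist_sym twos); lra.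
have c_eq1 : c = 1%N by lia.
have d_ge2 : (2 <= d)%N by lia.
by rewrite c_eq1 tdist_wcons_same tdist_wcons_1 // tdist_branch // a1; lra.
Qed.

Lemma tdist_le1 x y : infword None x -> infword None y -> tdist x y <= 1.
Proof.
move=> Hx Hy; apply: (@le_halfpow _ _ _ 1) => n; rewrite mul1r.
elim: n x y Hx Hy => [|n IH] x y Hx Hy.
  rewrite halfpow0 /tdist; have := gprod_bound x y.
  by have := height_bound x; have := height_bound y; lra.
rewrite -(wcons_tail x) -(wcons_tail y) halfpowS; have e_ge0 := halfpow_ge0 R n.
have [Hx1 Hy1] := (infword_tail Hx, infword_tail Hy).
have /andP[ac_gt0 ac_le] := a_range (x 0%N); have /andP[ad_gt0 ad_le] := a_range (y 0%N).
have /andP[hx_ge0 hx_le1] := height_bound (wtail x).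
have /andP[hy_ge0 hy_le1] := height_bound (wtail y).
have c1 := proj1 (Hx 0%N); have d1 := proj1 (Hy 0%N).
case: (eqVneq (x 0%N) (y 0%N)) => [<-|cd].
  by rewrite tdist_wcons_same; have := IH _ _ Hx1 Hy1; nra.
have [c_ge2|c_lt2] := leqP 2 (x 0%N).
  have [d_ge2|d_lt2] := leqP 2 (y 0%N).
    by rewrite tdist_wcons_big //; [nra | apply/eqP].
  have -> : y 0%N = 1%N by lia.
  by rewrite tdist_sym tdist_wcons_1 //; have := IH _ _ Hy1 infword_twos; nra.
have -> : x 0%N = 1%N by lia.
rewrite tdist_wcons_1; last by move: cd; lia.
by have := IH _ _ Hx1 infword_twos; nra.
Qed.

Lemma tdist_wcons_affine c y : (1 <= c)%N -> infword None y ->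
  exists A z, infword None z /\
    forall x, infword None x -> tdist (wcons c x) y = A + a c * tdist x z.
Proof.
move=> c1 Hy; rewrite -(wcons_tail y); have d1 := proj1 (Hy 0%N).
case: (eqVneq c (y 0%N)) => [<-|cd].
  exists 0, (wtail y); split=> [|x _]; first exact: infword_tail.
  by rewrite tdist_wcons_same add0r.
have [c_ge2|c_lt2] := leqP 2 c.
  exists (if (2 <= y 0)%N then a (y 0%N) * height (wtail y) else tdist (wtail y) twos / 2).
  exists ones; split=> // x Hx; rewrite tdist_ones //.
  have [d_ge2|d_lt2] := leqP 2 (y 0%N).
    by rewrite tdist_wcons_big //; [lra | apply/eqP].
  have -> : y 0%N = 1%N by lia.
  by rewrite tdist_sym tdist_wcons_1 //; lra.
have c_eq1 : c = 1%N by lia.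
exists (a (y 0%N) * height (wtail y)), twos; split=> // x Hx.
by rewrite c_eq1 tdist_wcons_1 ?a1; [lra | move: cd; rewrite c_eq1; lia].
Qed.

Lemma tdist_osc v x x' y : cyl None v x -> cyl None v x' -> infword None y ->
  `|tdist x y - tdist x' y| <= Delta a v.
Proof.
elim: v x x' y => [|c v IH] x x' y Hx Hx' Hy; have [[Ix _] [Ix' _]] := (Hx, Hx').
  rewrite /Delta big_nil; move: (tdist_ge0 Ix Hy) (tdist_le1 Ix Hy).
  by move: (tdist_ge0 Ix' Hy) (tdist_le1 Ix' Hy); rewrite ler_norml; lra.
have [x0 Hx1] := cyl_consE Hx; have [x0' Hx1'] := cyl_consE Hx'.
have c1 : (1 <= c)%N by rewrite -x0; exact: (proj1 (Ix 0%N)).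
have [A [z [Hz Haff]]] := tdist_wcons_affine c1 Hy.
rewrite -(wcons_tail x) -(wcons_tail x') x0 x0' (Haff _ (proj1 Hx1)) (Haff _ (proj1 Hx1')).
have -> : forall T T', A + a c * T - (A + a c * T') = a c * (T - T') by move=> *; ring.
have /andP[ac_gt0 _] := a_range c.
by rewrite normrM ger0_norm ?(ltW ac_gt0) // Delta_cons ler_pM2l //; exact: IH.
Qed.

Lemma tdist_glue r i y : word None r -> (2 <= i)%N -> infword None y ->
  tdist (wcat r (wcons 1 twos)) y = tdist (wcat r (wcons i ones)) y.
Proof.
move=> + i2; elim: r y => [|c r IH] y Hr Hy /=.
  rewrite -(wcons_tail y); have d1 := proj1 (Hy 0%N); have Hy1 := infword_tail Hy.
  case: (eqVneq (y 0%N) 1) => [->|d_ne1].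
    rewrite tdist_wcons_same a1 (tdist_sym (wcons i _)) tdist_wcons_1 // height_ones.
    by rewrite tdist_sym; lra.
  have d2 : (2 <= y 0)%N by lia.
  rewrite tdist_wcons_1 // tdist_xx.
  case: (eqVneq i (y 0%N)) => [<-|di].
    by rewrite tdist_wcons_same tdist_sym tdist_ones //; lra.
  by rewrite tdist_wcons_big //; [rewrite height_ones; lra | apply/eqP].
move: Hr => /word_cons [[c1 _] Hr].
have [A [z [Hz Haff]]] := tdist_wcons_affine c1 Hy.
have inAi : inA None i by split=> //; exact: ltnW.
have I1 : infword None (wcat r (wcons 1 twos)) by apply/infword_wcat/infword_wcons.
have Ii : infword None (wcat r (wcons i ones)) by apply/infword_wcat/infword_wcons.
by rewrite (Haff _ I1) (Haff _ Ii) IH.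
Qed.



(** * Rays and geodesics *)

(* [ray z t] is the point at height [t] on the segment from the root to [z],
   produced one letter at a time by rescaling the state [(z, t)]: below the
   branch point [1 twos] the segment runs through [1 T], above it through the
   subtree [c T] containing [z]. *)
Definition ray_letter (s : (nat -> nat) * R) : nat :=
  if (s.1 0%N == 1%N) || (s.2 <= 2^-1) then 1%N else s.1 0%N.

Definition ray_next (s : (nat -> nat) * R) : (nat -> nat) * R :=
  if s.1 0%N == 1%N then (wtail s.1, 2 * s.2)
  else if s.2 <= 2^-1 then (twos, 2 * s.2)
  else (wtail s.1, (s.2 - 2^-1) / a (s.1 0%N)).

Definition ray (z : nat -> nat) (t : R) : nat -> nat :=
  fun k => ray_letter (iter k ray_next (z, t)).

Lemma ray_wcons z (t : R) :
  ray z t = wcons (ray_letter (z, t)) (ray (ray_next (z, t)).1 (ray_next (z, t)).2).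
Proof. by apply: funext => -[|k] //=; rewrite /ray iterSr -surjective_pairing. Qed.

Lemma ray_letters (P : nat -> Prop) z (t : R) : P 1%N -> P 2%N -> (forall k, P (z k)) ->
  forall k, P (ray z t k).
Proof.
move=> P1 P2 Pz k.
have Ps j : forall i, P ((iter j ray_next (z, t)).1 i).
  elim: j => [|j IH] //= i; rewrite /ray_next; case: ifP => _ /=; first exact: IH.
  by case: ifP => _ /=; [|exact: IH].
by rewrite /ray /ray_letter; case: ifP => _; [|exact: Ps].
Qed.

Lemma ray_infword M z (t : R) : inA M 2 -> infword M z -> infword M (ray z t).
Proof. by move=> inA2 Hz k; apply: ray_letters => //; exact: inA1. Qed.

Lemma ray_wcons1 u (t : R) : ray (wcons 1 u) t = wcons 1 (ray u (2 * t)).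
Proof. by rewrite ray_wcons /ray_letter /ray_next /=. Qed.

Lemma ray_low c u (t : R) : c != 1%N -> t <= 2^-1 -> ray (wcons c u) t = ray (wcons 1 twos) t.
Proof. by move=> /negPf c1 t_le; rewrite ray_wcons ray_wcons1 /ray_letter /ray_next /= c1 t_le. Qed.

Lemma ray_high c u (t : R) : c != 1%N -> 2^-1 < t ->
  ray (wcons c u) t = wcons c (ray u ((t - 2^-1) / a c)).
Proof. by move=> /negPf c1 /lt_geF t_gt; rewrite ray_wcons /ray_letter /ray_next /= c1 t_gt. Qed.

Lemma min_gprod_branch c u y (t : R) : (2 <= c)%N -> t <= 2^-1 -> infword None y ->
  Num.min t (gprod (wcons c u) y) = Num.min t (gprod (wcons 1 twos) y).
Proof.
move=> c2 t_le Hy; rewrite -(wcons_tail y); have d1 := proj1 (Hy 0%N).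
case: (eqVneq (y 0%N) 1) => [->|d_ne1].
  rewrite (gprod_sym (wcons c u)) (@gprod_wcons_1 c (wtail y) u c2) gprod_wcons_same a1 /=.
  by rewrite add0r (gprod_sym twos) mulrC.
have d2 : (2 <= y 0)%N by lia.
have half_le : 2^-1 <= gprod (wcons c u) (wcons (y 0%N) (wtail y)).
  case: (eqVneq c (y 0%N)) => [<-|cd]; last by rewrite gprod_wcons_big //; apply/eqP.
  rewrite gprod_wcons_same c2; have /andP[a_gt0 _] := a_range c.
  by have /andP[g_ge0 _] := gprod_bound u (wtail y); nra.
rewrite gprod_wcons_1 // -/(height twos) height_twos !min_l //; lra.
Qed.

Section RayStep.
Variable e : R.
Hypothesis ray_err : forall z y (t : R), infword None z -> infword None y -> 0 <= t <= height z ->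
  `|gprod (ray z t) y - Num.min t (gprod z y)| <= e.

Let e_ge0 : 0 <= e.
Proof.
have t0 : 0 <= (0 : R) <= height ones by rewrite height_ones lexx.
exact: le_trans (normr_ge0 _) (ray_err infword_ones infword_ones t0).
Qed.

Lemma ray_err_wcons1 u y (t : R) : infword None u -> infword None y ->
  0 <= t <= height (wcons 1 u) ->
  `|gprod (ray (wcons 1 u) t) y - Num.min t (gprod (wcons 1 u) y)| <= e / 2.
Proof.
move=> Hu Hy; rewrite height_wcons a1 /= add0r => /andP[t_ge0 t_le].
have Ht : 0 <= 2 * t <= height u by apply/andP; split; lra.
have [z [Hz gprodE]] : exists z, infword None z /\ forall v, gprod (wcons 1 v) y = gprod v z / 2.
  rewrite -(wcons_tail y); have d1 := proj1 (Hy 0%N).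
  case: (eqVneq (y 0%N) 1) => [->|d_ne1].
    exists (wtail y); split=> [|v]; first exact: infword_tail.
    by rewrite gprod_wcons_same a1 /= add0r mulrC.
  by exists twos; split=> // v; rewrite gprod_wcons_1 //; lia.
rewrite ray_wcons1 !gprodE.
have -> : Num.min t (gprod u z / 2) = Num.min (2 * t) (gprod u z) / 2.
  by rewrite minr_pMl ?invr_ge0 //; congr (Num.min _ _); field.
rewrite -mulrBl normrM (ger0_norm (x := 2^-1)) ?invr_ge0 //.
by have := ray_err Hu Hz Ht; lra.
Qed.

Lemma ray_err_low c u y (t : R) : (2 <= c)%N -> infword None u -> infword None y ->
  0 <= t <= 2^-1 ->
  `|gprod (ray (wcons c u) t) y - Num.min t (gprod (wcons c u) y)| <= e / 2.
Proof.
move=> c2 Hu Hy /andP[t_ge0 t_le].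
rewrite ray_low ?min_gprod_branch //; last by rewrite neq_ltn c2 orbT.
apply: ray_err_wcons1 => //; rewrite height_wcons a1 height_twos /=; lra.
Qed.

Lemma ray_err_high c u y (t : R) : (2 <= c)%N -> infword None u -> infword None y ->
  2^-1 < t <= height (wcons c u) ->
  `|gprod (ray (wcons c u) t) y - Num.min t (gprod (wcons c u) y)| <= e / 2.
Proof.
move=> c2 Hu Hy /andP[t_gt t_le]; rewrite height_wcons c2 in t_le.
have /andP[a_gt0 a_le] := a_range c.
rewrite ray_high; [|by rewrite neq_ltn c2 orbT|by []].
set t' := (t - 2^-1) / a c.
have Et : t = 2^-1 + a c * t' by rewrite /t' mulrCA divff ?gt_eqF // mulr1; ring.
have Ht' : 0 <= t' <= height u.
  by apply/andP; split; [rewrite divr_ge0 //; lra | rewrite ler_pdivrMr // mulrC; lra].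
rewrite -(wcons_tail y); have d1 := proj1 (Hy 0%N).
case: (eqVneq c (y 0%N)) => [<-|cd].
  rewrite !gprod_wcons_same c2 Et min_affine ?(ltW a_gt0) //.
  have -> : forall T T', 2^-1 + a c * T - (2^-1 + a c * T') = a c * (T - T') by move=> *; ring.
  rewrite normrM ger0_norm ?(ltW a_gt0) //.
  have := ray_err Hu (infword_tail Hy) Ht'.
  by have := normr_ge0 (gprod (ray u t') (wtail y) - Num.min t' (gprod u (wtail y))); nra.
have [g [g_le gprodE]] : exists g, g <= 2^-1 /\
    forall v, gprod (wcons c v) (wcons (y 0%N) (wtail y)) = g.
  case: (eqVneq (y 0%N) 1) => [->|d_ne1].
    exists (gprod (wtail y) twos / 2); split=> [|v]; last by rewrite gprod_sym gprod_wcons_1.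
    by have /andP[_ g_le1] := gprod_bound (wtail y) twos; lra.
  by exists 2^-1; split=> // v; rewrite gprod_wcons_big //; [apply/eqP | lia].
by rewrite !gprodE min_r ?subrr ?normr0 ?divr_ge0 //; lra.
Qed.

Lemma ray_err_step z y (t : R) : infword None z -> infword None y -> 0 <= t <= height z ->
  `|gprod (ray z t) y - Num.min t (gprod z y)| <= e / 2.
Proof.
move=> Hz Hy; rewrite -(wcons_tail z); have Hu := infword_tail Hz.
have c1 := proj1 (Hz 0%N).
case: (eqVneq (z 0%N) 1) => [->|c_ne1] Ht; first exact: ray_err_wcons1.
have c2 : (2 <= z 0)%N by lia.
have /andP[t_ge0 t_le] := Ht.
case: (lerP t 2^-1) => t_half; first by apply: ray_err_low => //; rewrite t_ge0.
by apply: ray_err_high => //; rewrite t_half.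
Qed.

End RayStep.

Lemma gprod_ray z y (t : R) : infword None z -> infword None y -> 0 <= t <= height z ->
  gprod (ray z t) y = Num.min t (gprod z y).
Proof.
move=> Hz Hy Ht; apply: (@eq_halfpow _ _ _ 1) => n.
elim: n z y t Hz Hy Ht => [|n IH] z y t Hz Hy Ht.
  rewrite halfpow0 mulr1; have := gprod_bound (ray z t) y; have := gprod_bound z y.
  have := height_bound z; case/andP: Ht => t_ge0 t_le.
  by case: (lerP t (gprod z y)) => _; rewrite ler_norml; lra.
by rewrite halfpowS mulrA; exact: (ray_err_step IH Hz Hy Ht).
Qed.

Lemma height_ray z (t : R) : infword None z -> 0 <= t <= height z -> height (ray z t) = t.
Proof.
move=> Hz Ht; have Hr : infword None (ray z t) by apply: ray_infword.
rewrite /height (gprod_ray Hz Hr Ht) gprod_sym (gprod_ray Hz Hz Ht) -/(height z).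
by case/andP: Ht => _ t_le; rewrite (min_l t_le) minxx.
Qed.

Lemma tdist_ray z y (s : R) : infword None z -> infword None y -> 0 <= s <= height z ->
  tdist (ray z s) y = s + height y - 2 * Num.min s (gprod z y).
Proof. by move=> Hz Hy Hs; rewrite /tdist height_ray // gprod_ray. Qed.



Lemma tdist_rays z y (s t : R) : infword None z -> infword None y ->
  0 <= s <= height z -> 0 <= t <= height y ->
  tdist (ray z s) (ray y t) = s + t - 2 * Num.min s (Num.min t (gprod y z)).
Proof.
move=> Hz Hy Hs Ht; have Hr : infword None (ray y t) by apply: ray_infword.
by rewrite tdist_ray // height_ray // (gprod_sym z) gprod_ray.
Qed.

Section Geodesic.
Variables w u : nat -> nat.
Hypotheses (Hw : infword None w) (Hu : infword None u).

Definition geodesic (t : R) : nat -> nat :=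
  if t <= height w - gprod w u then ray w (height w - t)
  else ray u (t - height w + 2 * gprod w u).

Let confluence_bounds : [/\ 0 <= gprod w u, gprod w u <= height w & gprod w u <= height u].
Proof.
split; [by case/andP: (gprod_bound w u) | exact: gprod_le_height |].
by rewrite gprod_sym; exact: gprod_le_height.
Qed.

Lemma geodesic_infword M (t : R) : inA M 2 -> infword M w -> infword M u ->
  infword M (geodesic t).
Proof. by move=> inA2 Mw Mu; rewrite /geodesic; case: ifP => _; apply: ray_infword. Qed.

Lemma tdist_geodesic_l t : 0 <= t <= tdist w u -> tdist (geodesic t) w = t.
Proof.
have [g_ge0 g_le_w g_le_u] := confluence_bounds.
move=> /andP[t_ge0 t_le]; have D : tdist w u = height w + height u - 2 * gprod w u by [].
rewrite /geodesic; case: ifP => t_low.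
  have Hs : 0 <= height w - t <= height w by apply/andP; split; lra.
  by rewrite tdist_ray // -/(height w) min_l; lra.
have t_high : height w - gprod w u < t by rewrite ltNge t_low.
have Hs : 0 <= t - height w + 2 * gprod w u <= height u by apply/andP; split; lra.
by rewrite tdist_ray // (gprod_sym u) min_r; lra.
Qed.

Lemma tdist_geodesic_r t : 0 <= t <= tdist w u -> tdist (geodesic t) u = tdist w u - t.
Proof.
have [g_ge0 g_le_w g_le_u] := confluence_bounds.
move=> /andP[t_ge0 t_le]; have D : tdist w u = height w + height u - 2 * gprod w u by [].
rewrite /geodesic; case: ifP => t_low.
  have Hs : 0 <= height w - t <= height w by apply/andP; split; lra.
  by rewrite tdist_ray // min_r; lra.
have t_high : height w - gprod w u < t by rewrite ltNge t_low.
have Hs : 0 <= t - height w + 2 * gprod w u <= height u by apply/andP; split; lra.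
by rewrite tdist_ray // -/(height u) min_l; lra.
Qed.

Lemma tdist_geodesic s t : 0 <= s <= tdist w u -> 0 <= t <= tdist w u ->
  tdist (geodesic s) (geodesic t) = `|s - t|.
Proof.
wlog st : s t / s <= t.
  move=> H Hs Ht; case/orP: (le_total s t) => st; first exact: H.
  by rewrite tdist_sym distrC; exact: H.
have [g_ge0 g_le_w g_le_u] := confluence_bounds.
move=> /andP[s_ge0 s_le] /andP[t_ge0 t_le].
have D : tdist w u = height w + height u - 2 * gprod w u by [].
rewrite distrC ger0_norm ?subr_ge0 // /geodesic; case: ifP => s_low; case: ifP => t_low.
- have Hs : 0 <= height w - s <= height w by apply/andP; split; lra.
  have Ht : 0 <= height w - t <= height w by apply/andP; split; lra.
  by rewrite tdist_rays // -/(height w); case: (lerP (height w - t) (height w)) => ?;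
    case: (lerP (height w - s) (height w - t)) => ?; lra.
- have Hs : 0 <= height w - s <= height w by apply/andP; split; lra.
  have t_high : height w - gprod w u < t by rewrite ltNge t_low.
  have Ht : 0 <= t - height w + 2 * gprod w u <= height u by apply/andP; split; lra.
  rewrite tdist_rays // (gprod_sym u).
  by case: (lerP (t - height w + 2 * gprod w u) (gprod w u)) => ?;
    case: (lerP (height w - s) (gprod w u)) => ?; lra.
- by lra.
have s_high : height w - gprod w u < s by rewrite ltNge s_low.
have t_high : height w - gprod w u < t by rewrite ltNge t_low.
have Hs : 0 <= s - height w + 2 * gprod w u <= height u by apply/andP; split; lra.
have Ht : 0 <= t - height w + 2 * gprod w u <= height u by apply/andP; split; lra.
by rewrite tdist_rays // -/(height u); case: (lerP (t - height w + 2 * gprod w u) (height u)) => ?;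
  case: (lerP (s - height w + 2 * gprod w u) (t - height w + 2 * gprod w u)) => ?; lra.
Qed.

End Geodesic.

End GromovProduct.

(** * The chain metric *)

(* The letter [0] never occurs in words; giving it the weight [a 1] makes the
   recursion for [gprod] contracting on all of [nat -> nat]. *)
Definition ext_weight (R : realType) (a : nat -> R) (c : nat) : R := a (maxn 1 c).

Section Rho.
Variables (R : realType) (M : option nat) (a : nat -> R).
Hypotheses (inA2 : inA M 2) (weight_a : is_weight a).

Local Notation rho := (Defs.rho M a).

Lemma weight_bound i : (1 <= i)%N -> 0 < a i <= 2^-1.
Proof. by case: weight_a => H _ /H; rewrite mul1r. Qed.

Lemma weight1 : a 1 = 2^-1.
Proof. by case: weight_a => _ [_ [-> _]]; rewrite mul1r. Qed.

Lemma weight2 : a 2 = 2^-1.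
Proof. by case: weight_a => _ [_ [_ [-> _]]]; rewrite mul1r. Qed.

Lemma Delta_gt0 v : word M v -> 0 < Delta a v.
Proof.
elim: v => [|c v IH]; first by rewrite /Delta big_nil.
move=> /word_cons [[Hc _] Hv]; rewrite Delta_cons mulr_gt0 ?IH //.
by case/andP: (weight_bound Hc).
Qed.

Lemma Delta_prefix_le x n : infword M x -> Delta a (prefix x n) <= halfpow R n.
Proof.
elim: n x => [|n IH] x Hx; first by rewrite halfpow0 /Delta big_nil.
rewrite -(wcons_tail x) prefix_wcons Delta_cons halfpowS.
have /andP[a_gt0 a_le] := weight_bound (proj1 (Hx 0%N)).
have := IH _ (infword_tail Hx); have := Delta_gt0 (word_prefix (n:=n) (infword_tail Hx)).
by have := halfpow_ge0 R n; nra.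
Qed.

Lemma Delta_nseq k c : a c = 2^-1 -> Delta a (nseq k c) = halfpow R k.
Proof.
move=> ac; elim: k => [|k IH]; first by rewrite halfpow0 /Delta big_nil.
by rewrite /= Delta_cons IH ac halfpowS mulrC.
Qed.

Definition cost (vs : seq (seq nat)) : R := \sum_(v <- vs) Delta a v.

Lemma cost_cons v vs : cost (v :: vs) = Delta a v + cost vs.
Proof. exact: big_cons. Qed.

Definition chain_costs w w' : set R := [set s | exists vs, chain M vs w w' /\ s = cost vs].

Lemma cost_ge0 vs w w' : chain M vs w w' -> 0 <= cost vs.
Proof.
move=> [_ [Hws _]]; rewrite /cost big_seq sumr_ge0 // => v /Hws Hv.
exact/ltW/Delta_gt0.
Qed.

Lemma chain_costs_ge0 w w' : lbound (chain_costs w w') 0.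
Proof. by move=> _ [vs [Hc ->]]; exact: cost_ge0 Hc. Qed.

Lemma chain_costs_nonempty w w' : infword M w -> infword M w' -> chain_costs w w' !=set0.
Proof. by move=> Hw Hw'; exists (cost [:: [::]]), [:: [::]]; split=> //; apply: chain1. Qed.

Lemma rho_ge0 w w' : 0 <= rho w w'.
Proof.
have [ne|/set0P/negP/negPn/eqP empty] := pselect (chain_costs w w' !=set0).
  exact: lb_le_inf ne (@chain_costs_ge0 w w').
by rewrite /rho -/(chain_costs w w') empty inf0.
Qed.

Lemma rho_le_cost vs w w' : chain M vs w w' -> rho w w' <= cost vs.
Proof. by move=> Hc; apply: ge_inf; [exists 0; exact: chain_costs_ge0 | exists vs]. Qed.

Lemma rho_ge (r : R) w w' : infword M w -> infword M w' ->
  (forall vs, chain M vs w w' -> r <= cost vs) -> r <= rho w w'.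
Proof.
move=> Hw Hw' H; apply: lb_le_inf; first exact: chain_costs_nonempty.
by move=> _ [vs [Hc ->]]; exact: H.
Qed.

Lemma rho_le_Delta v w w' : word M v -> cyl M v w -> cyl M v w' -> rho w w' <= Delta a v.
Proof.
move=> Hv H1 H2; have := rho_le_cost (chain1 Hv H1 H2).
by rewrite /cost big_cons big_nil addr0.
Qed.

Lemma rho_le1 w w' : infword M w -> infword M w' -> rho w w' <= 1.
Proof. by move=> H1 H2; have := @rho_le_Delta [::] w w'; rewrite /Delta big_nil; apply. Qed.

Lemma chain_near_rho w w' e : infword M w -> infword M w' -> 0 < e ->
  exists2 vs, chain M vs w w' & cost vs < rho w w' + e.
Proof.
move=> H1 H2 e0; have ne := chain_costs_nonempty H1 H2.
have : rho w w' < rho w w' + e by rewrite ltrDl.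
by move=> /(inf_lt ne) [_ [vs [Hc ->]] lt]; exists vs.
Qed.

Lemma rho_triangle w y w' : infword M w -> infword M y -> infword M w' ->
  rho w w' <= rho w y + rho y w'.
Proof.
move=> H1 H2 H3; apply/ler_addgt0Pr => e e0.
have e2 : 0 < e / 2 by rewrite divr_gt0.
have [vs1 C1 L1] := chain_near_rho H1 H2 e2; have [vs2 C2 L2] := chain_near_rho H2 H3 e2.
have := rho_le_cost (chain_cat inA2 C1 C2); rewrite /cost big_cat /= -!/(cost _).
lra.
Qed.

Lemma rho_sym w w' : infword M w -> infword M w' -> rho w w' = rho w' w.
Proof.
have le u u' : infword M u -> infword M u' -> rho u u' <= rho u' u.
  move=> Hu Hu'; apply: rho_ge => // vs Hc.
  by have := rho_le_cost (chain_rev inA2 Hc); rewrite /cost big_rev.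
by move=> H1 H2; apply/eqP; rewrite eq_le !le.
Qed.

Lemma rho_wcons_le c w w' : inA M c -> infword M w -> infword M w' ->
  rho (wcons c w) (wcons c w') <= a c * rho w w'.
Proof.
move=> Hc H1 H2; have /andP[ac_gt0 _] := weight_bound (proj1 Hc).
have cost_map vs : cost (map (cons c) vs) = a c * cost vs.
  by rewrite /cost big_map mulr_sumr; apply: eq_bigr => v _; rewrite Delta_cons.
rewrite mulrC -ler_pdivrMr //; apply: rho_ge => // vs Hv.
rewrite ler_pdivrMr // mulrC -cost_map.
exact: rho_le_cost (chain_map inA2 Hc Hv).
Qed.

Lemma rho_glue i : inA M i -> i <> 1%N -> rho (wcons 1 twos) (wcons i ones) = 0.
Proof.
move=> Hi Hi1; apply/eqP; rewrite eq_le rho_ge0 andbT.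
have /andP[ai_gt0 ai_le] := weight_bound (proj1 Hi); have inA1 := inA1 inA2.
apply: (@le_halfpow _ _ _ 1) => k; rewrite add0r mul1r.
have c1 : cyl M (1%N :: nseq k 2%N) (wcons 1 twos) by apply: cyl_wcons; last exact: cyl_const.
have ci : cyl M (i :: nseq k 1%N) (wcons i ones) by apply: cyl_wcons; last exact: cyl_const.
have Hc : chain M [:: 1%N :: nseq k 2%N; i :: nseq k 1%N] (wcons 1 twos) (wcons i ones).
  apply: (chain_cons _ c1 _ (chain1 _ ci ci)).
  - by apply/word_cons; split=> //; apply: word_nseq.
  - by exists (wcons 1 twos); left; apply: wedge_half_glue.
  - by apply/word_cons; split=> //; apply: word_nseq.
apply: le_trans (rho_le_cost Hc) _.
rewrite /cost !big_cons big_nil !Delta_cons !Delta_nseq ?weight1 ?weight2 //.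
by have := halfpow_ge0 R k; nra.
Qed.

Section LowerBound.
Variable F : (nat -> nat) -> R.
Hypothesis F_osc : forall v x x', word M v -> cyl M v x -> cyl M v x' ->
  `|F x - F x'| <= Delta a v.
Hypothesis F_glue : forall r i, word M r -> inA M i -> i <> 1%N ->
  F (wcat r (wcons 1 twos)) = F (wcat r (wcons i ones)).

Lemma edge_F_eq n p q : edgeE M n p q ->
  exists x y, [/\ cyl M p x, cyl M q y & F x = F y].
Proof.
move=> /edgeE_glue [r [i [k [Hi Hi1 Hr Hpq]]]]; have inA1 := inA1 inA2.
have c1 : cyl M (r ++ 1%N :: nseq k 2%N) (wcat r (wcons 1 twos)).
  by apply: cyl_wcat => //; apply: cyl_wcons => //; exact: cyl_const.
have ci : cyl M (r ++ i :: nseq k 1%N) (wcat r (wcons i ones)).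
  by apply: cyl_wcat => //; apply: cyl_wcons => //; exact: cyl_const.
have E := F_glue Hr Hi Hi1.
case: Hpq => -[-> ->]; first by exists (wcat r (wcons 1 twos)), (wcat r (wcons i ones)).
by exists (wcat r (wcons i ones)), (wcat r (wcons 1 twos)); split; rewrite ?E.
Qed.

Lemma wedge_half_near v1 v2 x n : wedge_half M v1 v2 x ->
  exists2 y, cyl M v2 y & `|F x - F y| <= halfpow R n.
Proof.
move=> [Hx Hedge]; set m := (maxn (maxn (size v1) (size v2)) n).+1.
have [u [_ [_ [Hu2 Hxu]]]] := Hedge m (leq_maxl _ _).
have [x' [y [Hx' Hy Exy]]] := edge_F_eq Hxu.
exists y; first exact: cyl_take Hy Hu2.
have Ix := proj1 Hx; have := F_osc (word_prefix (n := m) Ix) (cyl_prefix m Ix) Hx'.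
have := Delta_prefix_le m Ix; have : halfpow R m <= halfpow R n.
  by apply: halfpow_le; rewrite /m leqW // leq_maxr.
by rewrite -Exy; lra.
Qed.

Lemma chain_F_le vs w w' n : chain M vs w w' ->
  `|F w - F w'| <= cost vs + (size vs)%:R * halfpow R n.
Proof.
elim: vs w => [|v [|v' vs] IH] w; first by move/chain_nil.
  move=> /chain1E [Hv H1 H2]; rewrite /cost big_cons big_nil addr0 mul1r.
  by have := F_osc Hv H1 H2; have := halfpow_ge0 R n; lra.
move=> /chain_consE [Hv Hc [x Hx] Hr].
rewrite cost_cons (_ : (size _)%:R = (size (v' :: vs))%:R + 1); last by rewrite -natr1.
case: Hx => Hx.
  have [y Hy Fxy] := wedge_half_near n Hx.
  move: (F_osc Hv Hc (proj1 Hx)) Fxy (IH _ (Hr _ Hy)).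
  by rewrite !ler_norml; have := halfpow_ge0 R n; lra.
have [y Hy Fxy] := wedge_half_near n Hx.
move: (F_osc Hv Hc Hy) Fxy (IH _ (Hr _ (proj1 Hx))).
by rewrite !ler_norml; have := halfpow_ge0 R n; lra.
Qed.

Lemma F_lipschitz w w' : infword M w -> infword M w' -> `|F w - F w'| <= rho w w'.
Proof.
move=> Hw Hw'; apply: rho_ge => // vs Hc.
by apply: (@le_halfpow _ _ _ (size vs)%:R) => n; exact: chain_F_le.
Qed.

End LowerBound.

Local Notation a' := (ext_weight a).

Let ones_word : infword M ones := infword_const (inA1 inA2).
Let twos_word : infword M twos := infword_const inA2.
Let branch_word : infword M (wcons 1 twos) := infword_wcons (inA1 inA2) twos_word.

Lemma ext_weightE c : (1 <= c)%N -> a' c = a c.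
Proof. by move=> c1; rewrite /ext_weight (maxn_idPr c1). Qed.

Lemma ext_weight_ok : contraction_weight a'.
Proof.
split; first by move=> c; apply: weight_bound; rewrite leq_maxl.
by rewrite !ext_weightE // weight1 weight2.
Qed.

Lemma Delta_ext v : word M v -> Delta a' v = Delta a v.
Proof.
by move=> Hv; rewrite /Delta !big_seq; apply: eq_bigr => c /Hv [c1 _]; rewrite ext_weightE.
Qed.

Lemma tdist_le_rho x y : infword M x -> infword M y -> tdist a' x y <= rho x y.
Proof.
move=> Hx Hy; have Iy := infword_None Hy.
have osc v z z' : word M v -> cyl M v z -> cyl M v z' ->
    `|tdist a' z y - tdist a' z' y| <= Delta a v.
  move=> Hv Hz Hz'; rewrite -Delta_ext //.
  exact: (tdist_osc ext_weight_ok (cyl_None Hz) (cyl_None Hz') Iy).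
have glue r i : word M r -> inA M i -> i <> 1%N ->
    tdist a' (wcat r (wcons 1 twos)) y = tdist a' (wcat r (wcons i ones)) y.
  by move=> Hr [i1 _] i_ne1; apply: (tdist_glue ext_weight_ok (word_None Hr) _ Iy); lia.
have := F_lipschitz (F := tdist a' ^~ y) osc glue Hx Hy.
by rewrite /= tdist_xx subr0 ger0_norm // (tdist_ge0 ext_weight_ok (infword_None Hx) Iy).
Qed.

Lemma rho_wcons_branch_le c x : inA M c -> c <> 1%N -> infword M x ->
  rho (wcons c x) (wcons 1 twos) <= a c * rho x ones.
Proof.
move=> Hc c_ne1 Hx; have Ico := infword_wcons Hc ones_word.
have := rho_triangle (infword_wcons Hc Hx) Ico branch_word.
by rewrite (rho_sym Ico branch_word) rho_glue // addr0; have := rho_wcons_le Hc Hx ones_word; lra.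
Qed.

Lemma rho_branch_ones : rho (wcons 1 twos) ones <= 2^-1.
Proof.
have := rho_wcons_le (inA1 inA2) twos_word ones_word; rewrite wcons_const weight1.
by have := rho_le1 twos_word ones_word; lra.
Qed.

Lemma rho_branch_twos : rho (wcons 1 twos) twos <= 2^-1.
Proof.
have I2o := infword_wcons inA2 ones_word.
have := rho_triangle branch_word I2o twos_word; rewrite rho_glue // add0r.
have := rho_wcons_le inA2 ones_word twos_word; rewrite wcons_const weight2.
by have := rho_le1 ones_word twos_word; lra.
Qed.

Lemma rho_ones_le x : infword M x -> rho x ones <= height a' x.
Proof.
move=> Hx; apply: (@le_halfpow _ _ _ 1) => n; rewrite mul1r.
elim: n x Hx => [|n IH] x Hx.
  by rewrite halfpow0; have := rho_le1 Hx ones_word; have := height_bound ext_weight_ok x; lra.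
rewrite -(wcons_tail x) (height_wcons ext_weight_ok) halfpowS.
have Hx1 := infword_tail Hx; have Hc := Hx 0%N; rewrite ext_weightE; last exact: proj1 Hc.
have /andP[a_gt0 a_le] := weight_bound (proj1 Hc).
have IHx := IH _ Hx1; have e_ge0 := halfpow_ge0 R n.
case: (eqVneq (x 0%N) 1) => [c_eq1|c_ne1].
  rewrite c_eq1 -[ones]wcons_const /= add0r weight1.
  by have := rho_wcons_le (inA1 inA2) Hx1 ones_word; rewrite weight1; lra.
have c2 : (2 <= x 0)%N by move: (proj1 Hc); lia.
rewrite c2; have := rho_triangle (infword_wcons Hc Hx1) branch_word ones_word.
have := rho_wcons_branch_le Hc (elimN eqP c_ne1) Hx1; have := rho_branch_ones.
by have := rho_ge0 (wtail x) ones; nra.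
Qed.

Lemma rho_twos_le x : infword M x -> rho x twos <= tdist a' x twos.
Proof.
move=> Hx; apply: (@le_halfpow _ _ _ 1) => n; rewrite mul1r.
elim: n x Hx => [|n IH] x Hx.
  rewrite halfpow0; have := rho_le1 Hx twos_word.
  by have := tdist_ge0 ext_weight_ok (infword_None Hx) infword_twos; lra.
rewrite -(wcons_tail x) halfpowS; have Hx1 := infword_tail Hx; have Hc := Hx 0%N.
have IHx := IH _ Hx1; have e_ge0 := halfpow_ge0 R n.
have r_ge0 := rho_ge0 (wtail x) twos.
case: (eqVneq (x 0%N) 2) => [->|c_ne2].
  rewrite (tdist_wcons2_twos ext_weight_ok) -{1}[twos]wcons_const.
  by have := rho_wcons_le inA2 Hx1 twos_word; rewrite weight2; lra.
case: (eqVneq (x 0%N) 1) => [->|c_ne1].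
  rewrite (tdist_wcons1_twos ext_weight_ok).
  have := rho_triangle (infword_wcons (inA1 inA2) Hx1) branch_word twos_word.
  have := rho_wcons_le (inA1 inA2) Hx1 twos_word; rewrite weight1.
  by have := rho_branch_twos; lra.
have c3 : (3 <= x 0)%N by move: (proj1 Hc); lia.
rewrite (tdist_wcons_twos ext_weight_ok) // ext_weightE; last exact: proj1 Hc.
have := rho_triangle (infword_wcons Hc Hx1) branch_word twos_word.
have := rho_wcons_branch_le Hc (elimN eqP c_ne1) Hx1; have := rho_branch_twos.
have := rho_ones_le Hx1; have /andP[a_gt0 _] := weight_bound (proj1 Hc).
by have := rho_ge0 (wtail x) ones; nra.
Qed.

Lemma rho_branch_le z : infword M z -> rho (wcons 1 twos) z <= tdist a' (wcons 1 twos) z.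
Proof.
move=> Hz; rewrite -(wcons_tail z); have Hz1 := infword_tail Hz; have Hc := Hz 0%N.
case: (eqVneq (z 0%N) 1) => [->|c_ne1].
  rewrite (tdist_wcons_same ext_weight_ok) ext_weightE // weight1 (tdist_sym ext_weight_ok).
  have := rho_wcons_le (inA1 inA2) twos_word Hz1; rewrite weight1 (rho_sym twos_word Hz1).
  by have := rho_twos_le Hz1; lra.
have c2 : (2 <= z 0)%N by move: (proj1 Hc); lia.
rewrite (tdist_branch ext_weight_ok) // ext_weightE; last exact: proj1 Hc.
have := rho_triangle branch_word (infword_wcons Hc ones_word) (infword_wcons Hc Hz1).
rewrite rho_glue ?add0r //; last exact/eqP.
have := rho_wcons_le Hc ones_word Hz1; rewrite (rho_sym ones_word Hz1).
have := rho_ones_le Hz1; have /andP[a_gt0 _] := weight_bound (proj1 Hc).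
by have := rho_ge0 (wtail z) ones; nra.
Qed.

Lemma rho_le_tdist x y : infword M x -> infword M y -> rho x y <= tdist a' x y.
Proof.
move=> Hx Hy; apply: (@le_halfpow _ _ _ 1) => n; rewrite mul1r.
elim: n x y Hx Hy => [|n IH] x y Hx Hy.
  rewrite halfpow0; have := rho_le1 Hx Hy.
  by have := tdist_ge0 ext_weight_ok (infword_None Hx) (infword_None Hy); lra.
rewrite -(wcons_tail x) -(wcons_tail y) halfpowS.
have [Hx1 Hy1] := (infword_tail Hx, infword_tail Hy); have [Hc Hd] := (Hx 0%N, Hy 0%N).
have [Ix Iy] := (infword_wcons Hc Hx1, infword_wcons Hd Hy1).
case: (eqVneq (x 0%N) (y 0%N)) => [<-|cd].
  rewrite (tdist_wcons_same ext_weight_ok) ext_weightE; last exact: proj1 Hc.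
  have := rho_wcons_le Hc Hx1 Hy1; have := IH _ _ Hx1 Hy1.
  have /andP[a_gt0 a_le] := weight_bound (proj1 Hc).
  by have := halfpow_ge0 R n; nra.
rewrite (tdist_branch_split ext_weight_ok (wtail x) (wtail y) (proj1 Hc) (proj1 Hd) (elimN eqP cd)).
have := rho_triangle Ix branch_word Iy; have := rho_branch_le Ix; have := rho_branch_le Iy.
rewrite (rho_sym branch_word Ix) (tdist_sym ext_weight_ok (wcons 1 twos) (wcons (x 0%N) _)).
by have := halfpow_ge0 R n; lra.
Qed.

Lemma rho_tdist x y : infword M x -> infword M y -> rho x y = tdist a' x y.
Proof. by move=> Hx Hy; apply/eqP; rewrite eq_le rho_le_tdist // tdist_le_rho. Qed.

End Rho.

Lemma alphabet_inA2 M : (forall m, M = Some m -> (2 <= m)%N) -> inA M 2.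
Proof. by case: M => [m /(_ m erefl)|] //; split. Qed.

Theorem proposition5p1 (R : realType) (M : option nat) (a : nat -> R) :
  (forall m, M = Some m -> (2 <= m)%N) ->
  is_weight a ->
  forall w u : nat -> nat, infword M w -> infword M u ->
  exists g : R -> nat -> nat,
    (forall t, 0 <= t <= rho M a w u -> infword M (g t)) /\
    rho M a (g 0) w = 0 /\
    rho M a (g (rho M a w u)) u = 0 /\
    (forall s t, 0 <= s <= rho M a w u -> 0 <= t <= rho M a w u ->
       rho M a (g s) (g t) = `|s - t|).
Proof.
move=> HM weight_a w u Hw Hu.
have inA2 := alphabet_inA2 HM.
have ok := ext_weight_ok weight_a; have [Iw Iu] := (infword_None Hw, infword_None Hu).
have gI t : infword M (geodesic (ext_weight a) w u t) by apply: geodesic_infword.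
have rhoE := rho_tdist inA2 weight_a.
exists (geodesic (ext_weight a) w u); rewrite rhoE //.
have D_ge0 := tdist_ge0 ok Iw Iu.
split=> [t _|]; first exact: gI.
split; first by rewrite rhoE // (tdist_geodesic_l ok Iw Iu) // lexx.
split; first by rewrite rhoE // (tdist_geodesic_r ok Iw Iu) ?subrr // D_ge0 lexx.
by move=> s t Hs Ht; rewrite rhoE // (tdist_geodesic ok Iw Iu).
Qed.
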